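(* Let $(W,S)$ be a finitely generated Coxeter system and $v\in W$. Then $$\sum_{x\le v}\mu(e,x)\,t^{|S(x)|}=(1-t)^{|\mathrm{Des}(v)|},$$ where the sum is over all $x\in W$ with $x\le v$ and $\mu$ is the Möbius function of $(W,\le)$.
   Context: $(W,S)$ is a finitely generated Coxeter system with length function $\ell$ and identity $e$. For $w\in W$, $S(w)\subseteq S$ is the set of simple reflections appearing in a (any) reduced expression of $w$, and $\mathrm{Des}(w)=\{s\in S:\ell(ws)<\ell(w)\}$. For $I\subseteq S$, $W_I$ is the parabolic subgroup generated by $I$, $X_I=\{u\in W:\ell(us)>\ell(u)\ \forall s\in I\}$, and every $w\in W$ factors uniquely as $w=w^Iw_I$ with $w^I\in X_I$, $w_I\in W_I$ (parabolic components along $I$). The partial order on $W$: $u\le v$ iff $v_{S(u)}=u$ (so $e\le x$ for all $x$). *)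

From HB Require Import structures.
From mathcomp Require Import all_boot all_order all_algebra.
From mathcomp Require Import boolp.
Set Implicit Arguments. Unset Strict Implicit. Unset Printing Implicit Defensive.
Import GRing.Theory.

(* A finitely generated Coxeter system (W,S): a group W (possibly infinite)  *)
(* with a finite set S of generators (indexed by a finType), presented by    *)
(*   < S | (s t)^{m(s,t)} = e >,  m(s,t) = order of st in W (possibly oo).   *)
(* The presentation is expressed by its universal property: every map f of  *)
(* S into any group G satisfying the same relations ((st)^n = e in W ==>     *)
(* (f s f t)^n = e in G) extends to a group homomorphism W -> G.            *)

Fixpoint gpow (G : Type) (m : G -> G -> G) (u : G) (x : G) (n : nat) : G :=
  match n with 0 => u | n'.+1 => m x (gpow m u x n') end.

Definition is_group (G : Type) (m : G -> G -> G) (u : G) (i : G -> G) : Prop :=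
  [/\ forall x y z, m x (m y z) = m (m x y) z,
      forall x, m u x = x, forall x, m x u = x,
      forall x, m (i x) x = u & forall x, m x (i x) = u].

Record coxeter_system := CoxeterSystem {
  cW : eqType;
  cmul : cW -> cW -> cW;
  cone : cW;
  cinv : cW -> cW;
  cS : finType;
  cgen : cS -> cW;
  cW_group : is_group cmul cone cinv;
  cgen_inj : injective cgen;
  cgen_neq1 : forall s, cgen s <> cone;
  cgen_invol : forall s, cmul (cgen s) (cgen s) = cone;
  cgen_generates : forall w : cW, exists word : seq cS,
      w = foldr (fun s acc => cmul (cgen s) acc) cone word;
  cpresentation : forall (G : Type) (gm : G -> G -> G) (gu : G) (gi : G -> G),
      is_group gm gu gi -> forall f : cS -> G,
      (forall s t n, gpow cmul cone (cmul (cgen s) (cgen t)) n = cone ->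
                     gpow gm gu (gm (f s) (f t)) n = gu) ->
      exists h : cW -> G, (forall x y, h (cmul x y) = gm (h x) (h y)) /\
                          (forall s, h (cgen s) = f s)
}.

Section Coxeter.
Variable C : coxeter_system.
Local Notation W := (cW C).
Local Notation S := (cS C).
Local Notation "x * y" := (cmul x y).
Local Notation e := (cone C).
Local Notation gen := (cgen (c:=C)).

Definition wprod (word : seq S) : W := foldr (fun s acc => gen s * acc) e word.

Lemma length_ex (w : W) :
  exists n, `[< exists word, size word = n /\ wprod word = w >].
Proof.
have [word ->] := cgen_generates w.
by exists (size word); apply/asboolP; exists word.
Qed.

Definition length (w : W) : nat := ex_minn (length_ex w).

Definition reduced_word (word : seq S) (w : W) : Prop :=
  wprod word = w /\ size word = length w.

Definition supp (w : W) : {set S} :=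
  [set s | `[< exists word, reduced_word word w /\ s \in word >]].

Definition Des (w : W) : {set S} := [set s | length (w * gen s) < length w].

Definition in_parabolic (I : {set S}) (w : W) : Prop :=
  exists word : seq S, all (fun s => s \in I) word /\ wprod word = w.

Definition in_X (I : {set S}) (u : W) : Prop :=
  forall s, s \in I -> length u < length (u * gen s).

Definition par_comp (I : {set S}) (w : W) : W :=
  match pselect (exists b, in_parabolic I b /\ exists a, in_X I a /\ w = a * b)
  with
  | left H => proj1_sig (cid H)
  | right _ => e
  end.

Definition cox_le (u v : W) : Prop := par_comp (supp u) v = u.

Definition cox_interval (x y : W) : seq W :=
  match pselect (exists s : seq W, uniq s /\
                   forall z, z \in s = `[< cox_le x z /\ cox_le z y >])
  with
  | left H => proj1_sig (cid H)
  | right _ => [::]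
  end.

(* Moebius function of (W, <=):  mu(x,x) = 1,
   mu(x,y) = - sum_{x <= z < y} mu(x,z) for x < y,  mu(x,y) = 0 otherwise.
   Computed by recursion with fuel = size of the cox_interval. *)
Fixpoint mobius_fuel (n : nat) (x y : W) : int :=
  match n with
  | 0 => 0
  | n'.+1 =>
    if x == y then 1
    else if `[< cox_le x y >] then
      - \sum_(z <- cox_interval x y | z != y) mobius_fuel n' x z
    else 0
  end%R.

Definition mobius (x y : W) : int := mobius_fuel (size (cox_interval x y)).+1 x y.

End Coxeter.

From HB Require Import structures.
From mathcomp Require Import all_boot all_order all_algebra.
From mathcomp Require Import boolp zify.
Import GRing.Theory.

Set Implicit Arguments. Unset Strict Implicit. Unset Printing Implicit Defensive.

(* For x <= v the element x is recovered from v and its support, as x = v_{S(x)},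
   and a set K of generators is the support of some x <= v iff S(v_K) = K; this
   holds in particular for every K contained in Des(v).  By induction along the
   interval [e, x] one gets mu(e, x) = (-1)^|S(x)| if S(x) is contained in Des(v)
   and 0 otherwise: the sum over [e, x] becomes the alternating sum over the
   subsets of S(x) :&: Des(v), which is nonempty for x <> e because the last
   letter of a reduced word of x is a descent of v.  Summing over [e, v] then
   gives the sum of (-t)^|K| over K contained in Des(v), that is (1 - t)^|Des v|.

   The Coxeter-group facts this needs (exchange condition, unique factorisation
   w = w^I w_I with additive length) are derived from the presentation by Tits'
   argument: a morphism into the semidirect product of W with the functions
   W -> bool shows that the parity with which a reflection occurs along a word
   depends only on the element the word represents. *)

Section CoxeterGroup.
Variable C : coxeter_system.
Local Notation W := (cW C).
Local Notation S := (cS C).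
Local Notation "x * y" := (cmul x y).
Local Notation e := (cone C).
Local Notation inv := (@cinv C).
Local Notation gen := (@cgen C).

Lemma cmulA (x y z : W) : x * (y * z) = x * y * z.
Proof. by case: (cW_group C). Qed.

Lemma cmul1w (x : W) : e * x = x.
Proof. by case: (cW_group C). Qed.

Lemma cmulw1 (x : W) : x * e = x.
Proof. by case: (cW_group C). Qed.

Lemma cmulVw (x : W) : inv x * x = e.
Proof. by case: (cW_group C). Qed.

Lemma cmulwV (x : W) : x * inv x = e.
Proof. by case: (cW_group C). Qed.

Lemma cmulKw (x y : W) : inv x * (x * y) = y.
Proof. by rewrite cmulA cmulVw cmul1w. Qed.

Lemma cmulKVw (x y : W) : x * (inv x * y) = y.
Proof. by rewrite cmulA cmulwV cmul1w. Qed.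

Lemma cmulwK (x y : W) : x * y * inv y = x.
Proof. by rewrite -cmulA cmulwV cmulw1. Qed.

Lemma cmulwKV (x y : W) : x * inv y * y = x.
Proof. by rewrite -cmulA cmulVw cmulw1. Qed.

Lemma cmulwI (x y z : W) : x * y = x * z -> y = z.
Proof. by move=> h; rewrite -(cmulKw x y) h cmulKw. Qed.

Lemma cmulIw (x y z : W) : y * x = z * x -> y = z.
Proof. by move=> h; rewrite -(cmulwK y x) h cmulwK. Qed.

Lemma cinv_uniq (x y : W) : x * y = e -> y = inv x.
Proof. by move=> h; apply: (@cmulwI x); rewrite h cmulwV. Qed.

Lemma cinvK (x : W) : inv (inv x) = x.
Proof. by symmetry; apply: cinv_uniq; rewrite cmulVw. Qed.

Lemma cinvM (x y : W) : inv (x * y) = inv y * inv x.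
Proof. by symmetry; apply: cinv_uniq; rewrite cmulA cmulwK cmulwV. Qed.

Lemma cinv1 : inv e = e.
Proof. by symmetry; apply: cinv_uniq; rewrite cmul1w. Qed.

Lemma cgenV s : inv (gen s) = gen s.
Proof. by symmetry; apply: cinv_uniq; rewrite cgen_invol. Qed.

Lemma cgenK s x : gen s * (gen s * x) = x.
Proof. by rewrite cmulA cgen_invol cmul1w. Qed.

Lemma cgenKr s x : x * gen s * gen s = x.
Proof. by rewrite -cmulA cgen_invol cmulw1. Qed.

(** * Words and length *)

Lemma wprod_cat (a b : seq S) : wprod (a ++ b) = wprod a * wprod b.
Proof. by elim: a => [|s a IH] /=; rewrite ?cmul1w // IH cmulA. Qed.

Lemma wprod_rcons (a : seq S) s : wprod (rcons a s) = wprod a * gen s.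
Proof. by rewrite -cats1 wprod_cat /= cmulw1. Qed.

Lemma wprod_rev (a : seq S) : wprod (rev a) = inv (wprod a).
Proof.
elim: a => [|s a IH]; first by rewrite /= cinv1.
by rewrite rev_cons wprod_rcons IH /= cinvM cgenV.
Qed.

Lemma length_wprod (q : seq S) : length (wprod q) <= size q.
Proof. by rewrite /length; case: ex_minnP => m _; apply; apply/asboolP; exists q. Qed.

Definition reduced (q : seq S) := size q = length (wprod q).

Lemma reduced_ex (w : W) : exists2 q, reduced q & wprod q = w.
Proof.
have [q [hs hw]] : exists q, size q = length w /\ wprod q = w.
  by rewrite /length; case: ex_minnP => m /asboolP [q ?] _; exists q.
by exists q; rewrite /reduced hw.
Qed.

Lemma length_e : length e = 0.
Proof. by apply/eqP; rewrite -leqn0 (length_wprod [::]). Qed.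

Lemma length_eq0 (w : W) : length w = 0 -> w = e.
Proof.
have [q hq <-] := reduced_ex w.
by rewrite /reduced in hq; rewrite -hq => /size0nil ->.
Qed.

Lemma length_mul (x y : W) : length (x * y) <= length x + length y.
Proof.
have [q hq <-] := reduced_ex x; have [r hr <-] := reduced_ex y.
by rewrite -hq -hr -size_cat -wprod_cat length_wprod.
Qed.

Lemma length_gen s : length (gen s) = 1.
Proof.
have := length_wprod [:: s]; rewrite /= cmulw1 => hle.
apply/eqP; rewrite eqn_leq hle lt0n.
by apply/eqP => /length_eq0; apply: cgen_neq1.
Qed.

Lemma length_mul_gen_le (w : W) s : length (w * gen s) <= (length w).+1.
Proof. by rewrite -addn1 -(length_gen s) length_mul. Qed.

Lemma reduced_cat (a b : seq S) : reduced (a ++ b) -> reduced a /\ reduced b.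
Proof.
rewrite /reduced wprod_cat size_cat => h.
have hab := length_mul (wprod a) (wprod b).
have ha := length_wprod a; have hb := length_wprod b.
by split; apply/eqP; rewrite eqn_leq; lia.
Qed.

Lemma reduced_rcons (a : seq S) s : reduced (rcons a s) -> reduced a.
Proof. by rewrite -cats1 => /reduced_cat []. Qed.

(* The parity of the length is a morphism W -> Z/2 since every relation of the
   presentation has even length. *)
Lemma length_mul_gen (w : W) s :
  length (w * gen s) = (length w).+1 \/ length w = (length (w * gen s)).+1.
Proof.
have Z2 : is_group addb false id by split=> *; rewrite ?addbA ?addbb ?addbF.
have rel (s1 s2 : S) n : gpow (@cmul C) e (gen s1 * gen s2) n = e ->
    gpow addb false (true (+) true) n = false by move=> _; elim: n => //= n ->.
have [h [hM hg]] := @cpresentation C _ _ _ _ Z2 (fun=> true) rel.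
have h_e : h e = false by have := hM e e; rewrite cmul1w; case: (h e).
have h_odd x : h x = odd (length x).
  have [q hq <-] := reduced_ex x; rewrite -hq {hq}.
  by elim: q => [|a q IH] //=; rewrite hM hg IH.
have := hM w (gen s); rewrite hg !h_odd.
have := length_mul_gen_le w s; have := length_mul_gen_le (w * gen s) s.
rewrite cgenKr; move: (length w) (length (w * gen s)) => a b hab hba hodd.
have : a != b by apply/eqP => ab; move: hodd; rewrite ab; case: (odd b).
rewrite neq_ltn => /orP [] ?; [left|right]; lia.
Qed.

Lemma length_mul_gen_lt (w : W) s :
  length (w * gen s) < length w -> length w = (length (w * gen s)).+1.
Proof. by case: (length_mul_gen w s) => // ->; rewrite ltnNge leqnSn. Qed.

(** * The exchange condition *)

Definition conjw (p y : W) := inv p * y * p.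

(* The i-th reflection of s_1 ... s_k is p^-1 s_i p with p = s_(i+1) ... s_k;
   multiplying on the right by it deletes the letter s_i. *)
Fixpoint reflections (q : seq S) : seq W :=
  if q is s :: b then conjw (wprod b) (gen s) :: reflections b else [::].

Definition odd_count (l : seq W) (t : W) := odd (count_mem t l).

Definition sdp := prod W (W -> bool).

(* The second component of the image of a word records the reflections it
   crosses an odd number of times. *)
Definition sdp_mul (a b : sdp) : sdp :=
  (a.1 * b.1, fun t => b.2 t (+) a.2 (b.1 * t * inv b.1)).

Definition sdp_one : sdp := (e, fun=> false).

Definition sdp_inv (a : sdp) : sdp := (inv a.1, fun t => a.2 (inv a.1 * t * a.1)).

Lemma sdp_group : is_group sdp_mul sdp_one sdp_inv.
Proof.
split=> [[x f] [y g] [z h]|[x f]|[x f]|[x f]|[x f]]; rewrite /sdp_mul /=;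
  congr pair; try apply: funext => t.
- exact: cmulA.
- by rewrite addbA cinvM !cmulA.
- exact: cmul1w.
- by rewrite addbF.
- exact: cmulw1.
- by rewrite cinv1 cmulw1 cmul1w.
- exact: cmulVw.
- by rewrite !cmulA cmulVw cmul1w cmulwKV addbb.
- exact: cmulwV.
- by rewrite cinvK addbb.
Qed.

Definition word_sdp (q : seq S) : sdp := (wprod q, odd_count (reflections q)).

Definition gen_sdp (s : S) : sdp := (gen s, fun t => t == gen s).

Lemma word_sdp_cons s q : word_sdp (s :: q) = sdp_mul (gen_sdp s) (word_sdp q).
Proof.
rewrite /word_sdp /sdp_mul /=; congr pair; apply: funext => t.
rewrite /odd_count /=.
have -> : (conjw (wprod q) (gen s) == t) = (wprod q * t * inv (wprod q) == gen s).
  by apply/eqP/eqP => [<-|<-]; rewrite /conjw !cmulA ?cmulwV ?cmulVw cmul1w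
    ?cmulwK ?cmulwKV.
by rewrite oddD oddb addbC.
Qed.

Lemma word_sdp_cat (a b : seq S) :
  word_sdp (a ++ b) = sdp_mul (word_sdp a) (word_sdp b).
Proof.
have [sdpA sdp1m _ _ _] := sdp_group.
by elim: a => [|s a IH] /=; rewrite ?sdp1m // !word_sdp_cons IH sdpA.
Qed.

Local Notation cpow x n := (gpow (@cmul C) e x n).

Lemma cpowD x n m : cpow x (n + m) = cpow x n * cpow x m.
Proof. by elim: n => [|n IH] /=; rewrite ?cmul1w // IH cmulA. Qed.

Lemma cpowV x n : inv (cpow x n) = cpow (inv x) n.
Proof.
elim: n => [|n IH]; first exact: cinv1.
by rewrite -[in RHS]addn1 cpowD -IH /= cmulw1 cinvM.
Qed.

Definition alt_word (s t : S) n := flatten (nseq n [:: s; t]).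

Lemma wprod_alt_word s t n : wprod (alt_word s t n) = cpow (gen s * gen t) n.
Proof. by elim: n => [|n IH] //=; rewrite -IH cmulA. Qed.

Lemma reflections_alt_word s t n :
  reflections (alt_word s t n) =
  [seq cpow (inv (gen s * gen t)) k * gen t | k <- rev (iota 0 n.*2)].
Proof.
set x := gen s * gen t.
have ixE : inv x = gen t * gen s by rewrite cinvM !cgenV.
have tx1 : gen t * x = inv x * gen t by rewrite ixE /x !cmulA.
have tx m : gen t * cpow x m = cpow (inv x) m * gen t.
  elim: m => [|m IH] /=; first by rewrite cmul1w cmulw1.
  by rewrite cmulA tx1 -!cmulA IH.
elim: n => [|n IH] //.
rewrite [LHS]/= IH wprod_alt_word -/x.
have -> : rev (iota 0 n.+1.*2) = n.*2.+1 :: n.*2 :: rev (iota 0 n.*2).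
  by rewrite doubleS -addn2 iotaD rev_cat add0n.
congr [:: _, _ & _].
- by rewrite /conjw cinvM cpowV cgenV -cmulA tx -addnn -addnS cpowD /= ixE !cmulA.
- by rewrite /conjw cpowV -cmulA tx cmulA -cpowD addnn.
Qed.

(* The reflections of (st)^n come in two blocks related by the shift k -> k + n,
   which is invisible when (st)^n = e. *)
Lemma odd_count_alt_word s t n : cpow (gen s * gen t) n = e ->
  odd_count (reflections (alt_word s t n)) =1 (fun=> false).
Proof.
move=> hn y; rewrite /odd_count reflections_alt_word count_map count_rev.
rewrite -addnn iotaD count_cat add0n.
have -> : iota n n = map (addn n) (iota 0 n) by rewrite -iotaDl addn0.
rewrite count_map.
rewrite (@eq_count _ _ (preim (fun k => cpow (inv (gen s * gen t)) k * gen t)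
  (pred1 y))) ?oddD ?addbb // => k /=.
by rewrite cpowD -cpowV hn cinv1 cmul1w.
Qed.

Lemma odd_reflections_wprod (q q' : seq S) :
  wprod q = wprod q' -> odd_count (reflections q) =1 odd_count (reflections q').
Proof.
have [sdpA sdp1m sdpm1 sdpVm _] := sdp_group.
have rel (s t : S) n : cpow (gen s * gen t) n = e ->
    gpow sdp_mul sdp_one (sdp_mul (gen_sdp s) (gen_sdp t)) n = sdp_one.
  move=> hn; have -> : sdp_mul (gen_sdp s) (gen_sdp t) = word_sdp [:: s; t].
    by rewrite !word_sdp_cons /= sdpm1.
  have -> : gpow sdp_mul sdp_one (word_sdp [:: s; t]) n = word_sdp (alt_word s t n).
    elim: n {hn} => [|n /= ->]; last by rewrite -word_sdp_cat.
    by rewrite /= /word_sdp /sdp_one; congr pair; apply: funext.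
  rewrite /word_sdp wprod_alt_word hn; congr pair.
  exact/funext/odd_count_alt_word.
have [h [hM hg]] := @cpresentation C _ _ _ _ sdp_group gen_sdp rel.
have h_e : h e = sdp_one.
  have := congr1 (sdp_mul (sdp_inv (h e))) (hM e e).
  by rewrite cmul1w sdpA sdpVm sdp1m.
have h_word r : h (wprod r) = word_sdp r.
  by elim: r => [|a r IH] //=; rewrite hM hg IH word_sdp_cons.
by move=> E y; have := congr1 h E; rewrite !h_word => -[_ ->].
Qed.

Lemma mem_reflections (b : seq S) t : t \in reflections b ->
  exists b1 s b2, b = b1 ++ s :: b2 /\ t = conjw (wprod b2) (gen s).
Proof.
elim: b => [|s b IH] //=; rewrite in_cons => /orP [/eqP ->|/IH [b1 [s' [b2 [-> ->]]]]].
  by exists [::], s, b.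
by exists (s :: b1), s', b2.
Qed.

Lemma wprod_delete (b1 b2 : seq S) s :
  wprod (b1 ++ s :: b2) * conjw (wprod b2) (gen s) = wprod (b1 ++ b2).
Proof. by rewrite !wprod_cat /= /conjw -!cmulA cmulKVw cgenK. Qed.

Lemma reduced_uniq_reflections (q : seq S) : reduced q -> uniq (reflections q).
Proof.
elim: q => [|s b IH] //= hr.
have [_ hb] := reduced_cat (a := [:: s]) hr.
rewrite IH // andbT; apply/negP => /mem_reflections [b1 [s' [b2 [hb12 ht]]]].
have hdel : wprod (s :: b) = wprod (b1 ++ b2).
  rewrite -(wprod_delete b1 b2 s') -hb12 -ht /= /conjw.
  by rewrite -!cmulA cmulKVw.
have := length_wprod (b1 ++ b2); rewrite -hdel -hr /= hb12 !size_cat /= addnS.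
by rewrite ltnNge leqnSn.
Qed.

Lemma gen_in_reflections_rcons (r : seq S) s : gen s \in reflections (rcons r s).
Proof.
elim: r => [|a r IH] /=; last by rewrite in_cons IH orbT.
by rewrite /conjw cinv1 cmul1w cmulw1 mem_seq1.
Qed.

(* Since w s is shorter, w = wprod r s with r reduced, so s is a reflection of
   the reduced word r s; by invariance it occurs an odd number of times, hence
   at least once, among the reflections of q. *)
Lemma exchange (w : W) s (q : seq S) :
  length (w * gen s) < length w -> reduced q -> wprod q = w ->
  exists b1 s' b2, q = b1 ++ s' :: b2 /\ w * gen s = wprod (b1 ++ b2).
Proof.
move=> /length_mul_gen_lt hl hq hw.
have [r hr hrw] := reduced_ex (w * gen s).
have hrs : wprod (rcons r s) = w by rewrite wprod_rcons hrw cgenKr.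
have hred : reduced (rcons r s) by rewrite /reduced hrs size_rcons hr hrw hl.
have : odd_count (reflections q) (gen s).
  rewrite (odd_reflections_wprod (q' := rcons r s)); last by rewrite hw hrs.
  by rewrite /odd_count (count_uniq_mem _ (reduced_uniq_reflections hred))
    gen_in_reflections_rcons.
rewrite /odd_count => /odd_gt0; rewrite -has_count has_pred1.
move=> /mem_reflections [b1 [s' [b2 [hq' hc]]]].
by exists b1, s', b2; rewrite -(wprod_delete b1 b2 s') -hq' hw hc.
Qed.

Lemma reduced_subseq_ex (q : seq S) :
  exists r, [/\ subseq r q, reduced r & wprod r = wprod q].
Proof.
elim/last_ind: q => [|q s [r [hs hr hw]]].
  by exists [::]; rewrite /reduced /= length_e.
case: (length_mul_gen (wprod r) s) => hl.
  exists (rcons r s); split; first by rewrite -!cats1 cat_subseq.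
  - by rewrite /reduced !wprod_rcons hl size_rcons hr.
  - by rewrite !wprod_rcons hw.
have hlt : length (wprod r * gen s) < length (wprod r) by rewrite hl.
have [b1 [s' [b2 [hr' hw']]]] := exchange hlt hr erefl.
exists (b1 ++ b2); split.
- apply: (subseq_trans _ (subseq_rcons q s)); apply: subseq_trans hs.
  by rewrite hr' cat_subseq // subseq_cons.
- move: hr; rewrite /reduced hl {1}hr' size_cat /= addnS => -[h].
  by rewrite size_cat h hw'.
- by rewrite -hw' hw wprod_rcons.
Qed.

(** * Parabolic subgroups and minimal coset representatives *)

Lemma parabolic_wprod (I : {set S}) q : all (mem I) q -> in_parabolic I (wprod q).
Proof. by exists q. Qed.

Lemma parabolic1 (I : {set S}) : in_parabolic I e.
Proof. by exists [::]. Qed.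

Lemma parabolic_gen (I : {set S}) s : s \in I -> in_parabolic I (gen s).
Proof. by exists [:: s]; rewrite /= andbT cmulw1. Qed.

Lemma parabolicM (I : {set S}) x y :
  in_parabolic I x -> in_parabolic I y -> in_parabolic I (x * y).
Proof. by move=> [q [hq <-]] [r [hr <-]]; exists (q ++ r); rewrite all_cat hq hr wprod_cat. Qed.

Lemma parabolicV (I : {set S}) x : in_parabolic I x -> in_parabolic I (inv x).
Proof. by move=> [q [hq <-]]; exists (rev q); rewrite all_rev hq wprod_rev. Qed.

Lemma parabolicS (I J : {set S}) x :
  I \subset J -> in_parabolic I x -> in_parabolic J x.
Proof.
move=> /subsetP hIJ [q [hq <-]]; exists q; split => //.
by apply/allP => s /(allP hq) /hIJ.
Qed.

Lemma parabolic_reduced_ex (I : {set S}) x : in_parabolic I x ->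
  exists q, [/\ all (mem I) q, reduced q & wprod q = x].
Proof.
move=> [q [hq <-]]; have [r [hs hr hw]] := reduced_subseq_ex q.
by exists r; split => //; apply/allP => s /(mem_subseq hs) /(allP hq).
Qed.

Definition minrep (I : {set S}) (a : W) :=
  forall c, in_parabolic I c -> length a <= length (a * c).

Lemma minrep_ex (I : {set S}) (w : W) :
  exists c, in_parabolic I c /\ minrep I (w * c).
Proof.
have hex : exists n, `[< exists c, in_parabolic I c /\ length (w * c) = n >].
  by exists (length (w * e)); apply/asboolP; exists e; split => //; apply: parabolic1.
case: (ex_minnP hex) => m /asboolP [c [hc hm]] hmin.
exists c; split => // d hd; rewrite hm; apply: hmin; apply/asboolP.
by exists (c * d); split; [apply: parabolicM|rewrite cmulA].
Qed.

Lemma cat_eq_cat_cons (T : Type) (a q b1 b2 : seq T) s :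
  a ++ q = b1 ++ s :: b2 ->
  (exists x, a = b1 ++ s :: x /\ b2 = x ++ q) \/
  (exists y, b1 = a ++ y /\ q = y ++ s :: b2).
Proof.
elim: a b1 => [|x a IH] b1 /=; first by move=> ->; right; exists b1.
case: b1 => [|y b1] /= [-> h]; first by left; exists a.
by case: (IH _ h) => [[z [-> ->]]|[z [-> ->]]]; [left|right]; exists z.
Qed.

Lemma minrep_length_wprod (I : {set S}) (a : W) (q : seq S) :
  minrep I a -> all (mem I) q -> reduced q ->
  length (a * wprod q) = length a + size q.
Proof.
move=> ha; elim/last_ind: q => [|q s IH]; first by rewrite /= cmulw1 addn0.
rewrite all_rcons => /andP [hs hq] hr.
have IHq := IH hq (reduced_rcons hr).
rewrite wprod_rcons cmulA size_rcons addnS.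
case: (length_mul_gen (a * wprod q) s) => [->|hl]; first by rewrite IHq.
exfalso.
have [ra hra hraw] := reduced_ex a.
have hred : reduced (ra ++ q) by rewrite /reduced wprod_cat hraw IHq size_cat hra hraw.
have hlt : length (a * wprod q * gen s) < length (a * wprod q) by rewrite hl.
have hw : wprod (ra ++ q) = a * wprod q by rewrite wprod_cat hraw.
have [b1 [s' [b2 [hsp hdel]]]] := exchange hlt hred hw.
case: (cat_eq_cat_cons hsp) => [[x [hx hb2]]|[y [hy hq']]].
- have hc : in_parabolic I (wprod q * gen s * inv (wprod q)).
    by apply: parabolicM; [apply: parabolicM; [apply: parabolic_wprod|apply: parabolic_gen]
      |apply/parabolicV/parabolic_wprod].
  have hax : a * (wprod q * gen s * inv (wprod q)) = wprod (b1 ++ x).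
    apply: (@cmulIw (wprod q)).
    by rewrite !cmulA cmulwKV hdel hb2 catA wprod_cat.
  have := ha _ hc; rewrite hax; have := length_wprod (b1 ++ x).
  by rewrite -hraw -hra hx !size_cat /= addnS; lia.
- have hqs : wprod q * gen s = wprod (y ++ b2).
    by apply: (@cmulwI a); rewrite cmulA hdel hy -catA wprod_cat hraw wprod_cat.
  have := length_wprod (y ++ b2); rewrite -hqs.
  move: hr; rewrite /reduced wprod_rcons size_rcons hq' size_cat /= => <-.
  by rewrite size_cat; lia.
Qed.

Lemma minrep_lengthM (I : {set S}) a b : minrep I a -> in_parabolic I b ->
  length (a * b) = length a + length b.
Proof.
by move=> ha /parabolic_reduced_ex [q [hq hr <-]]; rewrite (minrep_length_wprod ha hq hr) hr.
Qed.

Lemma minrep_in_X (I : {set S}) a : minrep I a -> in_X I a.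
Proof.
move=> ha s hs; have := ha _ (parabolic_gen hs).
by case: (length_mul_gen a s) => ->; rewrite ?ltnSn ?ltnn.
Qed.

Lemma in_X_minrep (I : {set S}) a : in_X I a -> minrep I a.
Proof.
move=> ha; have [c [hc hm]] := minrep_ex I a.
have hcV : in_parabolic I (inv c) by apply: parabolicV.
have hl := minrep_lengthM hm hcV; rewrite cmulwK in hl.
have [q [hq hr hw]] := parabolic_reduced_ex hcV.
case/lastP: q hq hr hw => [|q s] hq hr hw.
  by move: hm; rewrite -[c]cinvK -hw cinv1 cmulw1.
exfalso; move: hq; rewrite all_rcons => /andP [hs hq].
have := ha s hs.
have -> : a * gen s = a * c * wprod q.
  by rewrite -{1}(cmulwK a c) -hw wprod_rcons -cmulA cgenKr.
rewrite (minrep_length_wprod hm hq (reduced_rcons hr)) hl -hw -hr size_rcons.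
by rewrite addnS ltnNge leqnSn.
Qed.

Lemma in_X_lengthM (I : {set S}) a b : in_X I a -> in_parabolic I b ->
  length (a * b) = length a + length b.
Proof. by move=> /in_X_minrep; apply: minrep_lengthM. Qed.

Lemma parabolic_factor_ex (I : {set S}) w :
  exists a b, [/\ in_X I a, in_parabolic I b & w = a * b].
Proof.
have [c [hc hm]] := minrep_ex I w.
by exists (w * c), (inv c); split; [exact: minrep_in_X|exact: parabolicV|rewrite cmulwK].
Qed.

Lemma parabolic_factor_uniq (I : {set S}) a b a' b' :
  in_X I a -> in_parabolic I b -> in_X I a' -> in_parabolic I b' ->
  a * b = a' * b' -> b = b'.
Proof.
move=> ha hb ha' hb' E.
have e1 : a' = a * (b * inv b') by rewrite cmulA E cmulwK.
have e2 : a = a' * (b' * inv b) by rewrite cmulA -E cmulwK.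
have l1 := in_X_lengthM ha (parabolicM hb (parabolicV hb')).
have l2 := in_X_lengthM ha' (parabolicM hb' (parabolicV hb)).
rewrite -e1 in l1; rewrite -e2 in l2.
have /length_eq0 h : length (b * inv b') = 0 by lia.
by apply: (@cmulIw (inv b')); rewrite h cmulwV.
Qed.

Lemma par_compE (I : {set S}) w a b :
  in_X I a -> in_parabolic I b -> w = a * b -> par_comp I w = b.
Proof.
move=> ha hb hw; rewrite /par_comp; case: pselect => [H|[]]; last first.
  by exists b; split => //; exists a.
case: (cid H) => b' [hb' [a' [ha' hw']]] /=.
by apply: (parabolic_factor_uniq ha' hb' ha hb); rewrite -hw' -hw.
Qed.

Lemma par_comp_spec (I : {set S}) w :
  in_parabolic I (par_comp I w) /\ exists2 a, in_X I a & w = a * par_comp I w.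
Proof.
have [a [b [ha hb hw]]] := parabolic_factor_ex I w.
by rewrite (par_compE ha hb hw); split => //; exists a.
Qed.

(** * Supports and the order *)

Lemma mem_supp s (w : W) q : reduced q -> wprod q = w -> s \in q -> s \in supp w.
Proof.
by move=> hr hw hs; rewrite inE; apply/asboolP; exists q; rewrite /reduced_word hr hw.
Qed.

Lemma supp_reduced_ex (w : W) :
  exists q, [/\ reduced q, wprod q = w & all (mem (supp w)) q].
Proof.
have [q hr hw] := reduced_ex w.
by exists q; split => //; apply/allP => s; apply: mem_supp.
Qed.

Lemma parabolic_supp (w : W) : in_parabolic (supp w) w.
Proof. by have [q [_ hw hq]] := supp_reduced_ex w; exists q. Qed.

Lemma parabolic_gen_mem (I : {set S}) s : in_parabolic I (gen s) -> s \in I.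
Proof.
move=> /parabolic_reduced_ex [q [hq hr hw]].
move: hr; rewrite /reduced hw length_gen.
case: q hq hw => [|s' [|]] //= /andP [hs' _].
by rewrite cmulw1 => /cgen_inj <-.
Qed.

(* If the last letter s of a reduced word q were outside I, the exchange
   condition applied to a reduced word of wprod q in W_I would put gen s in W_I. *)
Lemma parabolic_reduced_all (I : {set S}) q :
  reduced q -> in_parabolic I (wprod q) -> all (mem I) q.
Proof.
elim/last_ind: q => [|q s IH] // hr hp.
have hsI : s \in I.
  set w := wprod (rcons q s) in hp.
  have hlt : length (w * gen s) < length w.
    by rewrite /w -hr wprod_rcons cgenKr size_rcons ltnS length_wprod.
  have [p [hpI hpr hpw]] := parabolic_reduced_ex hp.
  have [b1 [s' [b2 [hsp hdel]]]] := exchange hlt hpr hpw.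
  apply: parabolic_gen_mem; rewrite -[gen s](cmulKw w) hdel.
  apply: parabolicM; first exact: parabolicV.
  by apply: parabolic_wprod; move: hpI; rewrite hsp !all_cat /= => /and3P [-> _ ->].
rewrite all_rcons; apply/andP; split => //; apply: IH (reduced_rcons hr) _.
by rewrite -[wprod q](cgenKr s) -wprod_rcons; apply/parabolicM/parabolic_gen.
Qed.

Lemma supp_subset (I : {set S}) (w : W) : in_parabolic I w -> supp w \subset I.
Proof.
move=> hp; apply/subsetP => s; rewrite inE => /asboolP [q [[hw hs] hin]].
have hr : reduced q by rewrite /reduced hw hs.
by move: hp; rewrite -hw => /(parabolic_reduced_all hr) /allP; apply.
Qed.

Lemma supp_e : supp e = set0.
Proof. by apply/eqP; rewrite -subset0; apply/supp_subset/parabolic1. Qed.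

Lemma supp_par_comp (K : {set S}) (w : W) : supp (par_comp K w) \subset supp w.
Proof.
have [hb [a ha hw]] := par_comp_spec K w.
apply/subsetP => s; rewrite inE => /asboolP [q [[hqw hqs] hin]].
have [ra hra hraw] := reduced_ex a.
apply: (@mem_supp _ _ (ra ++ q)); last by rewrite mem_cat hin orbT.
  by rewrite /reduced wprod_cat hraw hqw -hw size_cat hqs {2}hw (in_X_lengthM ha hb) hra hraw.
by rewrite wprod_cat hraw hqw.
Qed.

Lemma supp_par_compK (K : {set S}) (w : W) : supp (par_comp K w) \subset K.
Proof. by apply: supp_subset; case: (par_comp_spec K w). Qed.

Lemma par_comp_id (K : {set S}) (w : W) : in_parabolic K w -> par_comp K w = w.
Proof.
move=> hw; apply: (par_compE (a := e)) => //; last by rewrite cmul1w.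
by move=> s _; rewrite cmul1w length_e length_gen.
Qed.

Lemma par_comp_set0 (w : W) : par_comp set0 w = e.
Proof.
by apply: (par_compE (a := w)); [move=> s; rewrite inE|exact: parabolic1|rewrite cmulw1].
Qed.

(* (w_J)_K = w_K for K inside J: the factorisation w = (w^J (w_J)^K) (w_J)_K is
   the one along K, because lengths add in W_J. *)
Lemma par_comp_subset (K J : {set S}) (w : W) : K \subset J ->
  par_comp K (par_comp J w) = par_comp K w.
Proof.
move=> hKJ.
have [hb [a ha hw]] := par_comp_spec J w.
set b := par_comp J w in hb hw *.
have [hb' [a' ha' hb2]] := par_comp_spec K b.
set b' := par_comp K b in hb' hb2 *.
have ha'J : in_parabolic J a'.
  rewrite -[a'](cmulwK a' b') -hb2.
  by apply: parabolicM => //; apply/parabolicV/(parabolicS hKJ).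
symmetry; apply: (par_compE (a := a * a')) => //; last by rewrite -cmulA -hb2.
move=> s hs; have hsJ := subsetP hKJ s hs.
rewrite (in_X_lengthM ha ha'J) -cmulA (in_X_lengthM ha (parabolicM ha'J (parabolic_gen hsJ))).
by rewrite ltn_add2l; apply: ha'.
Qed.

Lemma cox_le_e (z : W) : cox_le e z.
Proof. by rewrite /cox_le supp_e par_comp_set0. Qed.

Lemma cox_le_refl (x : W) : cox_le x x.
Proof. exact/par_comp_id/parabolic_supp. Qed.

Lemma cox_le_supp (x z : W) : cox_le z x -> supp z \subset supp x.
Proof. by rewrite /cox_le => <-; apply: supp_par_comp. Qed.

Lemma cox_le_trans (v x z : W) : cox_le x v -> cox_le z x -> cox_le z v.
Proof.
move=> hx hz; rewrite /cox_le -(par_comp_subset _ (cox_le_supp hz)).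
by rewrite hx hz.
Qed.

Lemma cox_le_of_supp (v x z : W) :
  cox_le x v -> cox_le z v -> supp z \subset supp x -> cox_le z x.
Proof. by rewrite /cox_le => hx hz hsub; rewrite -{1}hx (par_comp_subset _ hsub) hz. Qed.

Lemma cox_le_supp_inj (v x z : W) :
  cox_le x v -> cox_le z v -> supp x = supp z -> x = z.
Proof. by rewrite /cox_le => hx hz E; rewrite -hx -hz E. Qed.

Definition below_supp (v : W) (K : {set S}) := supp (par_comp K v) == K.

Lemma below_supp_le (v : W) (K : {set S}) : below_supp v K -> cox_le (par_comp K v) v.
Proof. by rewrite /below_supp /cox_le => /eqP ->. Qed.

(* The last letter s of a reduced word q of x = v_{S(x)} is a descent of v, since
   v = a x with lengths adding and x s = wprod (q minus s). *)
Lemma cox_le_supp_Des (v x : W) : cox_le x v -> x != e -> supp x :&: Des v != set0.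
Proof.
move=> hx hne.
have [q [hr hw hall]] := supp_reduced_ex x.
case/lastP: q hr hw hall => [|q s] hr hw hall; first by move: hne; rewrite -hw eqxx.
apply/set0Pn; exists s; rewrite inE (mem_supp hr hw) ?mem_rcons ?mem_head //=.
have [_ [a ha hv]] := par_comp_spec (supp x) v.
move: hall; rewrite hx in hv; rewrite all_rcons => /andP [_ hq].
rewrite inE hv (in_X_lengthM ha (parabolic_supp x)) -cmulA.
have -> : x * gen s = wprod q by rewrite -hw wprod_rcons cgenKr.
rewrite (in_X_lengthM ha (parabolic_wprod hq)) ltn_add2l -(reduced_rcons hr) -hw -hr.
by rewrite size_rcons.
Qed.

Lemma Des_below_supp (v : W) (K : {set S}) : K \subset Des v -> below_supp v K.
Proof.
move=> hK; rewrite /below_supp eqEsubset supp_par_compK /=.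
apply/subsetP => s hs.
have [hb [a ha hv]] := par_comp_spec K v.
set b := par_comp K v in hb hv *; clearbody b.
have := subsetP hK s hs; rewrite inE hv -cmulA.
rewrite (in_X_lengthM ha hb) (in_X_lengthM ha (parabolicM hb (parabolic_gen hs))).
rewrite ltn_add2l => /length_mul_gen_lt hl.
have [r hr hrw] := reduced_ex (b * gen s).
have hrs : wprod (rcons r s) = b by rewrite wprod_rcons hrw cgenKr.
apply: (@mem_supp _ _ (rcons r s)) => //; last by rewrite mem_rcons mem_head.
by rewrite /reduced hrs size_rcons hr hrw hl.
Qed.

Lemma cox_interval_spec (y : W) : exists s : seq W, uniq s /\
  forall z, z \in s = `[< cox_le e z /\ cox_le z y >].
Proof.
exists (undup [seq z <- [seq par_comp K y | K <- enum {set S}] | `[< cox_le z y >]]).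
split=> [|z]; first exact: undup_uniq.
rewrite mem_undup mem_filter.
have -> : `[< cox_le e z /\ cox_le z y >] = `[< cox_le z y >].
  by apply: asbool_equiv_eq; split => [[]|]; [|split => //; apply: cox_le_e].
case: (boolP `[< cox_le z y >]) => //= /asboolP hz.
by apply/mapP; exists (supp z); rewrite ?mem_enum.
Qed.

Lemma mem_cox_interval (y z : W) : (z \in cox_interval e y) = `[< cox_le z y >].
Proof.
rewrite /cox_interval; case: pselect => [H|[]]; last exact: cox_interval_spec.
case: (cid H) => s [_ hs] /=; rewrite hs.
by apply: asbool_equiv_eq; split => [[]|]; [|split => //; apply: cox_le_e].
Qed.

Lemma cox_interval_uniq (y : W) : uniq (cox_interval e y).
Proof.
by rewrite /cox_interval; case: pselect => [H|//]; case: (cid H) => s [].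
Qed.

End CoxeterGroup.

(** * The Moebius function of the lower intervals *)

Local Open Scope ring_scope.

Lemma sum_subset_expr (R : comPzRingType) (T : finType) (A : {set T}) (a : R) :
  \sum_(K : {set T} | K \subset A) a ^+ #|K| = (1 + a) ^+ #|A|.
Proof.
have -> : (1 + a) ^+ #|A| = \prod_(i : T) ((if i \in A then a else 0) + 1).
  rewrite (eq_bigr (fun i => if i \in A then 1 + a else 1)); last first.
    by move=> i _; case: (i \in A); rewrite ?add0r // addrC.
  by rewrite -big_mkcond prodr_const.
rewrite bigA_distr big_mkcond /=; apply: eq_bigr => K _; rewrite -big_mkcond /=.
case: (boolP (K \subset A)) => hK.
  by rewrite (eq_bigr (fun=> a)) ?prodr_const // => i /(subsetP hK) ->.
have /subsetPn [i hiK hiA] := hK.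
by rewrite (bigD1 i) //= (negbTE hiA) mul0r.
Qed.

Section Moebius.
Variable C : coxeter_system.
Local Notation W := (cW C).
Local Notation S := (cS C).
Local Notation e := (cone C).

Lemma sum_below_supp (R : zmodType) (v : W) (U : {set S}) (s : seq W)
    (G : {set S} -> R) : uniq s ->
  (forall z, z \in s = `[< cox_le z v >] && (supp z \subset U)) ->
  \sum_(z <- s) G (supp z) = \sum_(K : {set S} | (K \subset U) && below_supp v K) G K.
Proof.
move=> hu hs.
rewrite -(big_map (@supp C) xpredT G) -[in RHS]big_filter.
apply: perm_big; apply: uniq_perm.
- rewrite map_inj_in_uniq // => x y.
  rewrite !hs => /andP [/asboolP hx _] /andP [/asboolP hy _].
  exact: cox_le_supp_inj hx hy.
- by rewrite filter_uniq // index_enum_uniq.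
move=> K; rewrite mem_filter mem_index_enum andbT.
apply/mapP/idP => [[z hz ->]|/andP [hK hop]].
  by move: hz; rewrite hs => /andP [/asboolP hz hzU]; rewrite hzU /below_supp hz eqxx.
exists (par_comp K v); last by rewrite (eqP hop).
by rewrite hs (eqP hop) hK andbT; apply/asboolP; apply: below_supp_le.
Qed.

Lemma sum_below_supp_Des (R : zmodType) (v : W) (U : {set S}) (h : {set S} -> R) :
  \sum_(K : {set S} | (K \subset U) && below_supp v K) (if K \subset Des v then h K else 0)
  = \sum_(K : {set S} | K \subset U :&: Des v) h K.
Proof.
rewrite big_mkcond [RHS]big_mkcond; apply: eq_bigr => K _.
rewrite subsetI; case: (boolP (K \subset Des v)) => hD; last by rewrite andbF; case: ifP.
by rewrite andbT Des_below_supp // andbT.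
Qed.

Definition des_sign (v : W) (K : {set S}) : int :=
  if K \subset Des v then (-1) ^+ #|K| else 0.

Lemma mem_cox_interval_le (v x z : W) : cox_le x v ->
  (z \in cox_interval e x) = `[< cox_le z v >] && (supp z \subset supp x).
Proof.
move=> hx; rewrite mem_cox_interval.
apply/asboolP/andP => [hz|[/asboolP hz hsub]]; last exact: cox_le_of_supp hx hz hsub.
by split; [apply/asboolP/(cox_le_trans hx)|apply: cox_le_supp].
Qed.

(* Summing des_sign over [e, x] is the alternating sum over the subsets of the
   nonempty set S(x) :&: Des(v). *)
Lemma sum_des_sign_interval (v x : W) : cox_le x v -> x != e ->
  \sum_(z <- cox_interval e x) des_sign v (supp z) = 0.
Proof.
move=> hx hne.
rewrite (sum_below_supp _ (cox_interval_uniq x) (fun z => mem_cox_interval_le z hx)).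
rewrite /des_sign sum_below_supp_Des sum_subset_expr subrr expr0n.
by rewrite cards_eq0 (negbTE (cox_le_supp_Des hx hne)).
Qed.

Lemma size_cox_interval_lt (x z : W) : cox_le z x -> z != x ->
  (size (cox_interval e z) < size (cox_interval e x))%N.
Proof.
move=> hz hne.
have hx : x \in cox_interval e x by rewrite mem_cox_interval; apply/asboolP/cox_le_refl.
have : (size (cox_interval e z) <= size (rem x (cox_interval e x)))%N.
  apply: uniq_leq_size; first exact: cox_interval_uniq.
  move=> y; rewrite (mem_rem_uniq _ (cox_interval_uniq x)) !mem_cox_interval.
  move=> /asboolP hy; rewrite inE mem_cox_interval (asboolT (cox_le_trans hz hy)) andbT.
  apply: contra_neq hne => E; rewrite E in hy.
  apply: (cox_le_supp_inj hz (cox_le_refl x)).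
  by apply/eqP; rewrite eqEsubset (cox_le_supp hz) (cox_le_supp hy).
rewrite size_rem // => /leq_ltn_trans; apply.
by case: (cox_interval e x) hx.
Qed.

Lemma mobius_fuel_e (v : W) n x : cox_le x v ->
  (size (cox_interval e x) < n)%N -> mobius_fuel n e x = des_sign v (supp x).
Proof.
elim: n x => [//|n IH] x hx hsz /=.
case: eqVneq => [<-|hne]; first by rewrite /des_sign supp_e sub0set cards0 expr0.
rewrite (asboolT (cox_le_e x)).
have hxI : x \in cox_interval e x by rewrite mem_cox_interval; apply/asboolP/cox_le_refl.
have := sum_des_sign_interval hx (ltac:(by rewrite eq_sym)).
rewrite (bigD1_seq x hxI (cox_interval_uniq x)) /= => /eqP; rewrite addr_eq0 => /eqP ->.
congr (- _); rewrite big_seq_cond [RHS]big_seq_cond; apply: eq_bigr => z /andP [hz hzx].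
have hzx' : cox_le z x by move: hz; rewrite mem_cox_interval => /asboolP.
apply: IH; first exact: cox_le_trans hx hzx'.
exact: leq_trans (size_cox_interval_lt hzx' hzx) hsz.
Qed.

Lemma mobius_e (v x : W) : cox_le x v -> mobius e x = des_sign v (supp x).
Proof. by move=> hx; apply: mobius_fuel_e. Qed.

End Moebius.

Theorem mainTheorem13 (C : coxeter_system) (v : cW C) :
  \sum_(x <- cox_interval (cone C) v) (mobius (cone C) x)%:P * 'X^#|supp x|
  = (1 - 'X) ^+ #|Des v| :> {poly int}.
Proof.
pose G (K : {set cS C}) : {poly int} := if K \subset Des v then (- 'X) ^+ #|K| else 0.
transitivity (\sum_(x <- cox_interval (cone C) v) G (supp x)).
  rewrite big_seq [RHS]big_seq; apply: eq_bigr => x.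
  rewrite mem_cox_interval => /asboolP /mobius_e ->.
  rewrite /G /des_sign; case: ifP => _; last by rewrite mul0r.
  by rewrite rmorphXn rmorphN rmorph1 [RHS]exprNn.
rewrite (sum_below_supp (v := v) (U := setT) G (cox_interval_uniq v)); last first.
  by move=> z; rewrite mem_cox_interval subsetT andbT.
by rewrite sum_below_supp_Des setTI sum_subset_expr.
Qed.
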